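(* Let $n \in \mathbb{N}$ and work in $\mathbb{Z}_n$. Let $A_0, B_0$ be non-empty disjoint integer intervals contained in $\left(\frac{n}{8}, \frac{n}{4}\right)$ with $A_0 < B_0$. Let $B_1 \subseteq B_0$ be an integer interval, and set $A = A_0 \cup A_0^{-1}$ and $B = B_0 \cup B_0^{-1} \cup 2B_1 \cup 2B_1^{-1}$. Then $(A + B) \cap A = \emptyset$. Moreover, if $n$ is even then $\left(A + \left\{\frac{n}{2}\right\}\right) \cap A = \emptyset$, and if furthermore $\min(B_1) \geq \frac{3n}{16}$ then $\left(\left\{\frac{n}{2}\right\} + B\right) \cap A = \emptyset$.
   Context: In $\mathbb{Z}_n$ (integers under addition mod $n$), for subsets $X,Y$: $X+Y=\{x+y: x\in X, y\in Y\}$, $2X=X+X$, and $X^{-1}=\{-x: x\in X\}$ (so $2B_1^{-1}$ is $2(B_1^{-1})$, the set of negatives of elements of $2B_1$). $X<Y$ means $(x \bmod n)<(y\bmod n)$ for all $x\in X$, $y\in Y$. An integer interval in $\left(\frac n8,\frac n4\right)$ is a set of consecutive integers lying strictly between $n/8$ and $n/4$, viewed as residues mod $n$. *)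

(* Subsets of Z_n are {set 'Z_n} (n >= 2 assumed). *)
From HB Require Import structures.
From mathcomp Require Import all_boot all_order all_algebra.
Set Implicit Arguments. Unset Strict Implicit. Unset Printing Implicit Defensive.
Import GRing.Theory.
Local Open Scope ring_scope.

(* integer interval {a, a+1, ..., b} of residues in Z_n (used with b < n) *)
Definition zint (n a b : nat) : {set 'Z_n} :=
  [set x : 'Z_n | (a <= val x <= b)%N].

Definition sumset (n : nat) (X Y : {set 'Z_n}) : {set 'Z_n} :=
  [set x + y | x in X, y in Y].

Definition negset (n : nat) (X : {set 'Z_n}) : {set 'Z_n} :=
  [set - x | x in X].

Definition set_lt (n : nat) (X Y : {set 'Z_n}) : Prop :=
  forall x y, x \in X -> y \in Y -> (val x < val y)%N.

From HB Require Import structures.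
From mathcomp Require Import all_boot all_order all_algebra zify.
Import GRing.Theory.
Set Implicit Arguments. Unset Strict Implicit.
Local Open Scope ring_scope.

(* Read residues through their representatives in [0, n).  Then A lies in
   (n/8, n/4) u (3n/4, 7n/8) and B in (n/8, n/2) u (n/2, 7n/8); once 2B1
   starts at 3n/8, n/2 + B misses (3n/4, 7n/8) as well.  A sum of two
   representatives either stays below n or exceeds it by exactly n, so every
   claim is a finite case analysis of linear inequalities.  The one case not
   settled by the position of these windows is x - y with x in A0 and y in B0:
   it lies in (-n/8, 0), i.e. in (7n/8, n), precisely because A0 < B0. *)

Local Notation symint n a b := (zint n a b :|: negset (zint n a b)).

Lemma in_zint n a b (x : 'Z_n) : (x \in zint n a b) = (a <= val x <= b)%N.
Proof. by rewrite inE. Qed.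

Lemma sumsetI_set0 n (X Y Z : {set 'Z_n}) :
  (forall x y, x \in X -> y \in Y -> x + y \notin Z) -> sumset X Y :&: Z = set0.
Proof.
move=> XYZ; apply/setP => z; rewrite in_set0 in_setI.
by apply/negbTE/andP => -[/imset2P[x y xX yY ->]]; apply/negP/XYZ.
Qed.

Lemma mem_negset n (X : {set 'Z_n}) x : (x \in negset X) = (- x \in X).
Proof.
by apply/imsetP/idP => [[y yX ->] | NxX]; [rewrite opprK | exists (- x); rewrite ?opprK].
Qed.

Lemma negsetS n (X Y : {set 'Z_n}) : X \subset Y -> negset X \subset negset Y.
Proof. exact: imsetS. Qed.

Lemma sumsetS n (X X' Y Y' : {set 'Z_n}) :
  X \subset X' -> Y \subset Y' -> sumset X Y \subset sumset X' Y'.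
Proof. exact: imset2S. Qed.

Section ResidueArithmetic.

Variable n : nat.
Hypothesis n_gt1 : (1 < n)%N.

Lemma val_Zp_lt (x : 'Z_n) : (val x < n)%N.
Proof. by rewrite -[X in (_ < X)%N](Zp_cast n_gt1) ltn_ord. Qed.

Lemma val_ZpD (x y : 'Z_n) : val (x + y) = ((val x + val y) %% n)%N.
Proof. by have n_eq := Zp_cast n_gt1; rewrite -[X in (_ %% X)%N]n_eq. Qed.

Lemma val_ZpN (x : 'Z_n) : val (- x) = ((n - val x) %% n)%N.
Proof.
have n_eq := Zp_cast n_gt1.
by rewrite -[X in ((X - _) %% _)%N]n_eq -[X in (_ %% X)%N]n_eq.
Qed.

Lemma val_ZpD_cases (x y : 'Z_n) :
  (val (x + y)%R = val x + val y \/ val (x + y)%R + n = val x + val y)%N.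
Proof.
have x_lt := val_Zp_lt x; have y_lt := val_Zp_lt y.
rewrite val_ZpD; have [sum_lt | sum_ge] := ltnP (val x + val y) n.
  by left; rewrite modn_small.
right; rewrite -{1}(subnK sum_ge) modnDr modn_small; lia.
Qed.

Lemma val_ZpN_cases (x : 'Z_n) :
  (val x = 0 /\ val (- x)%R = 0 \/ val (- x)%R + val x = n)%N.
Proof.
have x_lt := val_Zp_lt x; rewrite val_ZpN.
have [x_0 | x_pos] := posnP (val x); first by left; rewrite x_0 subn0 modnn.
by right; rewrite modn_small; lia.
Qed.

Lemma val_Zp_small k : (k < n)%N -> val (k%:R : 'Z_n) = k.
Proof. by move=> k_lt; rewrite -[RHS](modn_small k_lt); apply: val_Zp_nat. Qed.

Lemma mem_symint a b (x : 'Z_n) :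
  x \in symint n a b -> (a <= val x <= b)%N || (a <= n - val x <= b)%N.
Proof.
case/setUP; rewrite ?mem_negset in_zint; first by move->.
by have := val_ZpN_cases x; have := val_Zp_lt x; lia.
Qed.

Lemma sumset_zint_sub a c b d : (b + d < n)%N ->
  sumset (zint n a b) (zint n c d) \subset zint n (a + c) (b + d).
Proof.
move=> bd_lt; apply/subsetP => _ /imset2P[x y + + ->]; rewrite !in_zint => x_ab y_cd.
by have [->|] := val_ZpD_cases x y; lia.
Qed.

Lemma set_lt_zint a b c d : (a <= b)%N -> (c <= d)%N -> (b < n)%N -> (d < n)%N ->
  set_lt (zint n a b) (zint n c d) -> (b < c)%N.
Proof.
move=> a_le_b c_le_d b_lt d_lt /(_ b%:R c%:R).
by rewrite !in_zint !val_Zp_small ?leqnn ?a_le_b ?c_le_d //; [apply | lia].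
Qed.

Lemma mem_symint_sumset a b c d m (y : 'Z_n) :
  (b + b < n)%N -> zint n c d \subset zint n m b ->
  y \in zint n a b :|: negset (zint n a b)
        :|: sumset (zint n c d) (zint n c d) :|: negset (sumset (zint n c d) (zint n c d)) ->
  [|| (a <= val y <= b)%N, (a <= n - val y <= b)%N,
      (m + m <= val y <= b + b)%N | (m + m <= n - val y <= b + b)%N].
Proof.
move=> bb_lt B1_sub; rewrite -setUA => /setUP[y_B0 | y_2B1].
  by case/orP: (mem_symint y_B0) => ->; rewrite ?orbT.
have sum_sub : sumset (zint n c d) (zint n c d) \subset zint n (m + m) (b + b).
  exact: subset_trans (sumsetS B1_sub B1_sub) (sumset_zint_sub m m bb_lt).
have /mem_symint := subsetP (setUSS sum_sub (negsetS sum_sub)) y y_2B1.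
by case/orP=> ->; rewrite ?orbT.
Qed.

End ResidueArithmetic.

Theorem lemma3p2 (n a0 b0 a1 b1 c d : nat) :
  (1 < n)%N ->
  (a0 <= b0)%N -> (a1 <= b1)%N ->
  (n < 8 * a0)%N -> (4 * b0 < n)%N ->
  (n < 8 * a1)%N -> (4 * b1 < n)%N ->
  [disjoint zint n a0 b0 & zint n a1 b1] ->
  set_lt (zint n a0 b0) (zint n a1 b1) ->
  zint n c d \subset zint n a1 b1 ->
  let A0 := zint n a0 b0 in
  let B0 := zint n a1 b1 in
  let B1 := zint n c d in
  let A := A0 :|: negset A0 in
  let B := B0 :|: negset B0 :|: sumset B1 B1 :|: negset (sumset B1 B1) in
  let half : 'Z_n := (n %/ 2)%:R in
  sumset A B :&: A = set0 /\
  (~~ odd n ->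
     sumset A [set half] :&: A = set0 /\
     ((B1 != set0 /\ forall x, x \in B1 -> (3 * n <= 16 * val x)%N) ->
        sumset [set half] B :&: A = set0)).
Proof.
move=> n_gt1 a0_le_b0 a1_le_b1 a0_lb b0_ub a1_lb b1_ub _ A0_lt_B0 B1_sub; cbv zeta.
have b0_lt_n : (b0 < n)%N by lia.
have b1_lt_n : (b1 < n)%N by lia.
have b0_lt_a1 := set_lt_zint n_gt1 a0_le_b0 a1_le_b1 b0_lt_n b1_lt_n A0_lt_B0.
have b1b1_lt : (b1 + b1 < n)%N by lia.
split.
  apply: sumsetI_set0 => x y /(mem_symint n_gt1) x_A.
  move=> /(mem_symint_sumset n_gt1 b1b1_lt B1_sub) y_B; apply/negP => /(mem_symint n_gt1).
  by have := val_ZpD_cases n_gt1 x y; lia.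
rewrite -dvdn2 => n_even.
have half_val : val ((n %/ 2)%:R : 'Z_n) = (n %/ 2)%N by apply: val_Zp_small; lia.
split.
  apply: sumsetI_set0 => x _ /(mem_symint n_gt1) x_A /set1P->; apply/negP => /(mem_symint n_gt1).
  by have := val_ZpD_cases n_gt1 x (n %/ 2)%:R; lia.
move=> [_ B1_large].
have B1_sub_ceil : zint n c d \subset zint n ((3 * n + 15) %/ 16) b1.
  apply/subsetP => x x_B1; move: (subsetP B1_sub x x_B1) (B1_large x x_B1).
  (* The two [val x] come from different subType instances; lia needs one atom. *)
  by rewrite !in_zint -![val x]/(nat_of_ord x); lia.
apply: sumsetI_set0 => _ y /set1P->.
move=> /(mem_symint_sumset n_gt1 b1b1_lt B1_sub_ceil) y_B; apply/negP => /(mem_symint n_gt1).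
by have := val_ZpD_cases n_gt1 (n %/ 2)%:R y; lia.
Qed.
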